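(* Let $0\le \rho<\tfrac12$ and let $P_1\ge P_2$ with $P_1>0$, $P_2\ge 0$, $P_1+P_2=1$. Let $(N^e(t),N^d(t))_{t\ge t_0}$ be a Markov chain on $\mathbb{Z}^2$ with independent steps given by $(N^e,N^d)\to(N^e+1,N^d+1)$ with probability $(1-\rho)P_1$, $(N^e,N^d)\to(N^e+1,N^d-1)$ with probability $\rho P_1$, $(N^e,N^d)\to(N^e-1,N^d-1)$ with probability $(1-\rho)P_2$, and $(N^e,N^d)\to(N^e-1,N^d+1)$ with probability $\rho P_2$. Suppose the pair is stable at time $t_0$, i.e. $N^e(t_0)>0$ and $N^d(t_0)>0$. Let $Q$ be the probability that a recurrence occurs, i.e. that there exists $t>t_0$ with $N^e(t)=0$ or $N^d(t)=0$. Then $$Q\le \left(\frac{P_2}{P_1}\right)^{N^e(t_0)}+\left[\frac{\rho P_1+(1-\rho)P_2}{(1-\rho)P_1+\rho P_2}\right]^{N^d(t_0)}.$$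
   Context: This models error propagation for a rate-1 direct shaping code with parsing length $m=1$ used on SLC flash: i.i.d. input words $\mathbf{w}_1,\mathbf{w}_2$ occur with probabilities $P_1,P_2$; the encoder maps the word with currently larger count to output $1$ and the other to $0$; the output passes through a binary symmetric channel with crossover probability $\rho$; the decoder rebuilds the dictionary from the received bits. $N^e(t)=n_1^e(t)-n_2^e(t)$ is the difference of the counts of $\mathbf{w}_1$ and $\mathbf{w}_2$ among the first $t$ encoder inputs, and $N^d(t)=n_1^d(t)-n_2^d(t)$ the corresponding difference among decoder outputs; their joint evolution is modeled by the random walk in the claim. *)

From HB Require Import structures.
From mathcomp Require Import all_boot all_order all_algebra.
From mathcomp Require Import classical_sets reals constructive_ereal ereal.
Set Implicit Arguments. Unset Strict Implicit. Unset Printing Implicit Defensive.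
Import Order.TTheory GRing.Theory Num.Theory.
Local Open Scope ring_scope.

(* [hit_within rho P1 P2 n a b] = probability that the random walk
   (N^e, N^d) on Z^2 started at (a, b), with one-step transitions
     (+1,+1) w.p. (1-rho) P1,  (+1,-1) w.p. rho P1,
     (-1,-1) w.p. (1-rho) P2,  (-1,+1) w.p. rho P2,
   visits {N^e = 0} \/ {N^d = 0} at some time t with 1 <= t <= n
   (first-step decomposition of the finite-horizon hitting probability). *)
Fixpoint hit_within (R : realType) (rho P1 P2 : R) (n : nat) (a b : int) : R :=
  match n with
  | 0 => 0
  | n'.+1 =>
      let f (a' b' : int) :=
        if (a' == 0) || (b' == 0) then 1 else hit_within rho P1 P2 n' a' b' in
      (1 - rho) * P1 * f (a + 1) (b + 1)
      + rho * P1 * f (a + 1) (b - 1)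
      + (1 - rho) * P2 * f (a - 1) (b - 1)
      + rho * P2 * f (a - 1) (b + 1)
  end.

(* Recurrence probability Q: probability that there is t > t0 with
   N^e(t) = 0 or N^d(t) = 0, starting from (N^e(t0), N^d(t0)) = (a, b);
   by continuity of probability it is the supremum of the finite-horizon
   hitting probabilities. *)
Definition recurrence_prob (R : realType) (rho P1 P2 : R) (a b : int) : \bar R :=
  ereal_sup (range (fun n : nat => (hit_within rho P1 P2 n a b)%:E)).

(** The potential [g(m, n) = (P2/P1)^m + (down_d/up_d)^n], where [up_d] and
   [down_d] are the probabilities that [N^d] moves up and down, is harmonic for the walk: each
   coordinate of the walk is a one-dimensional walk for which the classical
   gambler's-ruin function [(q/p)^k] is harmonic.  Since [g >= 1] on the
   absorbing set [{N^e = 0} \/ {N^d = 0}] and [g >= 0] everywhere, induction on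
   the horizon bounds every finite-horizon hitting probability by [g]. *)
From HB Require Import structures.
From mathcomp Require Import all_boot all_order all_algebra.
From mathcomp Require Import classical_sets reals constructive_ereal ereal.
From mathcomp Require Import zify ring lra.
Import Order.TTheory GRing.Theory Num.Theory.
Local Open Scope ring_scope.

Lemma gamblers_ruin_harmonic {F : fieldType} (p q : F) (k : nat) : p != 0 ->
  p * (q / p) ^+ k.+2 + q * (q / p) ^+ k = (p + q) * (q / p) ^+ k.+1.
Proof. by move=> p_neq0; rewrite !exprS; field. Qed.

Section RecurrenceBound.

Variables (R : realType) (rho P1 P2 : R).
Hypotheses (rho_ge0 : 0 <= rho) (rho_lt1 : rho < 1).
Hypotheses (P1_gt0 : 0 < P1) (P2_ge0 : 0 <= P2) (P1_add_P2 : P1 + P2 = 1).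

Lemma one_sub_rho_gt0 : 0 < 1 - rho.
Proof. by rewrite subr_gt0. Qed.

Definition up_d := (1 - rho) * P1 + rho * P2.
Definition down_d := rho * P1 + (1 - rho) * P2.

Definition ruin_e := P2 / P1.
Definition ruin_d := down_d / up_d.

Definition potential (m n : nat) := ruin_e ^+ m + ruin_d ^+ n.

Lemma up_d_gt0 : 0 < up_d.
Proof.
have := mulr_gt0 one_sub_rho_gt0 P1_gt0; have := mulr_ge0 rho_ge0 P2_ge0.
rewrite /up_d; lra.
Qed.

Lemma ruin_e_ge0 : 0 <= ruin_e.
Proof. by rewrite divr_ge0 // ltW. Qed.

Lemma ruin_d_ge0 : 0 <= ruin_d.
Proof.
rewrite divr_ge0 ?(ltW up_d_gt0) //.
exact: addr_ge0 (mulr_ge0 rho_ge0 (ltW P1_gt0))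
                (mulr_ge0 (ltW one_sub_rho_gt0) P2_ge0).
Qed.

Lemma potential_ge0 m n : 0 <= potential m n.
Proof. by rewrite addr_ge0 // exprn_ge0 ?ruin_e_ge0 ?ruin_d_ge0. Qed.

Lemma potential_ge1_boundary m n : (m == 0)%N || (n == 0)%N -> 1 <= potential m n.
Proof.
by case/orP => /eqP ->; rewrite /potential expr0 ?lerDl ?lerDr exprn_ge0
  ?ruin_e_ge0 ?ruin_d_ge0.
Qed.

Lemma potential_harmonic m n :
  (1 - rho) * P1 * potential m.+2 n.+2 + rho * P1 * potential m.+2 n
  + (1 - rho) * P2 * potential m n + rho * P2 * potential m n.+2
  = potential m.+1 n.+1.
Proof.
have e_walk := gamblers_ruin_harmonic P1 P2 m (lt0r_neq0 P1_gt0).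
have d_walk := gamblers_ruin_harmonic up_d down_d n (lt0r_neq0 up_d_gt0).
have d_sum : up_d + down_d = P1 + P2 by rewrite /up_d /down_d; ring.
rewrite P1_add_P2 mul1r in e_walk; rewrite d_sum P1_add_P2 mul1r in d_walk.
rewrite /potential /ruin_e /ruin_d -e_walk -d_walk /up_d /down_d; ring.
Qed.

Lemma hit_within_le_potential k m n :
  hit_within rho P1 P2 k (Posz m.+1) (Posz n.+1) <= potential m.+1 n.+1.
Proof.
elim: k m n => [|k IH] m n; first exact: potential_ge0.
have stopped (m' n' : nat) :
    (if (Posz m' == 0) || (Posz n' == 0) then 1 else hit_within rho P1 P2 k m' n')
    <= potential m' n'.
  by case: m' n' => [|m'] [|n'] /=; rewrite ?IH ?potential_ge1_boundary.
rewrite /=.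
have -> : Posz m.+1 + 1 = Posz m.+2 by lia.
have -> : Posz m.+1 - 1 = Posz m by lia.
have -> : Posz n.+1 + 1 = Posz n.+2 by lia.
have -> : Posz n.+1 - 1 = Posz n by lia.
rewrite -potential_harmonic.
have [c_ge0 P1_ge0] := (ltW one_sub_rho_gt0, ltW P1_gt0).
move: (stopped m.+2 n.+2) (stopped m.+2 n) (stopped m n) (stopped m n.+2) => /=.
by move=> *; rewrite !lerD // ler_wpM2l // mulr_ge0.
Qed.

End RecurrenceBound.

Theorem theorem2 (R : realType) (rho P1 P2 : R) (a b : int) :
  0 <= rho -> rho < 1 / 2 ->
  P2 <= P1 -> 0 < P1 -> 0 <= P2 -> P1 + P2 = 1 ->
  0 < a -> 0 < b ->
  (recurrence_prob rho P1 P2 a b <=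
     ((P2 / P1) ^ a
      + ((rho * P1 + (1 - rho) * P2) / ((1 - rho) * P1 + rho * P2)) ^ b)%:E)%E.
Proof.
move=> rho_ge0 rho_lt_half _ P1_gt0 P2_ge0 P1_add_P2.
have rho_lt1 : rho < 1 by lra.
case: a => [[|m]|//] // _; case: b => [[|n]|//] // _.
apply: ub_ereal_sup => _ [k _ <-].
by rewrite lee_fin; exact: hit_within_le_potential.
Qed.
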